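(* Let $f\in\mathbb R[x_1,\dots,x_n]$ satisfy conditions (C1), (C2), (C3) and let $\lambda_f$ be a map of minimal barycentric coordinates of $f$. If \[ \sum_{\alpha^\star\in D(f)\cap(2\mathbb N_0^n)^c}\frac{|f_{\alpha^\star}|}{\Theta(f,\lambda_f,\alpha^\star)}-\sum_{\alpha^\star\in D(f)\cap 2\mathbb N_0^n}\frac{\min\{0,f_{\alpha^\star}\}}{\Theta(f,\lambda_f,\alpha^\star)}<1, \] then $f$ is coercive on $\mathbb R^n$, i.e. $f(x)\to+\infty$ whenever $\|x\|\to+\infty$.
   Context: Notation: $\mathbb N_0=\mathbb N\cup\{0\}$, $[n]=\{1,\dots,n\}$, $e_i$ the standard unit vectors, $(2\mathbb N_0^n)^c=\mathbb N_0^n\setminus 2\mathbb N_0^n$. Write $f(x)=\sum_{\alpha\in A(f)}f_\alpha x^\alpha$ with $A(f)\subseteq\mathbb N_0^n$ finite and $f_\alpha\neq0$ for $\alpha\in A(f)$. The Newton polytope at infinity is $\mathrm{New}_\infty(f)=\mathrm{conv}(A(f)\cup\{0\})$; $V_0(f)$ is its vertex set (it contains $0$), $V(f)=V_0(f)\setminus\{0\}$, $V_0^c(f)=A(f)\setminus V_0(f)$, $V^c(f)=A(f)\setminus V(f)$. Conditions: (C1) $V(f)\subset 2\mathbb N_0^n$; (C2) $f_\alpha>0$ for all $\alpha\in V(f)$; (C3) for every $i\in[n]$, $V(f)$ contains a vector $2k_ie_i$ with $k_i\in\mathbb N$. Let $\mathcal G(f)$ be the set of nonempty faces $G$ of $\mathrm{New}_\infty(f)$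 with $0\notin G$. An exponent $\alpha\in A(f)$ is gem degenerate if $\alpha\in V^c(f)\cap G$ for some $G\in\mathcal G(f)$; $D(f)$ is the set of gem degenerate exponents. A map of minimal barycentric coordinates of $f$ is a map $\lambda_f:V_0^c(f)\times V_0(f)\to[0,1]$ such that for each $\alpha^\star\in V_0^c(f)$ there is an affinely independent set $W_{\alpha^\star}\subseteq V_0(f)$ with $\lambda_f(\alpha^\star,\alpha)>0$ for $\alpha\in W_{\alpha^\star}$, $\lambda_f(\alpha^\star,\alpha)=0$ for $\alpha\in V_0(f)\setminus W_{\alpha^\star}$, and $\sum_{\alpha\in W_{\alpha^\star}}\lambda_f(\alpha^\star,\alpha)(\alpha,1)=(\alpha^\star,1)$. Write $W_{\alpha^\star}(\lambda_f)=\{\alpha\in V_0(f):\lambda_f(\alpha^\star,\alpha)>0\}$. The circuit number is $\Theta(f,\lambda_f,\alpha^\star)=\prod_{\alpha\in W_{\alpha^\star}(\lambda_f)}\bigl(f_\alpha/\lambda_f(\alpha^\star,\alpha)\bigr)^{\lambda_f(\alpha^\star,\alpha)}$; under (C2),(C3) it is positive for every $\alpha^\star\in D(f)$. *)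

From Stdlib Require Import Reals Lra List Arith Bool ClassicalEpsilon.
Import ListNotations.
Open Scope R_scope.

(* Exponent vectors alpha in N_0^n are functions nat -> nat (only the
   coordinates i < n matter; support exponents are required to vanish
   for i >= n).  Points of R^n are functions nat -> R, coordinates i < n. *)
Definition expo := nat -> nat.
Definition pt := nat -> R.

Definition Rsum (m : nat) (g : nat -> R) : R :=
  fold_right Rplus 0 (map g (seq 0 m)).
Definition Rprod (m : nat) (g : nat -> R) : R :=
  fold_right Rmult 1 (map g (seq 0 m)).

Definition zero_exp : expo := fun _ => 0%nat.
Definition toR (a : expo) : pt := fun i => INR (a i).
Definition dot (n : nat) (w y : pt) : R := Rsum n (fun i => w i * y i).

Definition nzb (n : nat) (a : expo) : bool :=
  existsb (fun i => negb (Nat.eqb (a i) 0)) (seq 0 n).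
Definition nonzero (n : nat) (a : expo) : Prop := exists i, (i < n)%nat /\ a i <> 0%nat.
Definition all_even (n : nat) (a : expo) : bool :=
  forallb (fun i => Nat.even (a i)) (seq 0 n).

Definition eval (n : nat) (A : list expo) (coef : expo -> R) (x : pt) : R :=
  fold_right Rplus 0 (map (fun a => coef a * Rprod n (fun i => x i ^ a i)) A).

Definition norm (n : nat) (x : pt) : R := sqrt (Rsum n (fun i => x i ^ 2)).

Definition wf_poly (n : nat) (A : list expo) (coef : expo -> R) : Prop :=
  NoDup A /\
  (forall a, In a A -> forall i, (n <= i)%nat -> a i = 0%nat) /\
  (forall a, In a A -> coef a <> 0) /\
  (forall a, coef a <> 0 -> In a A).

Definition gens (A : list expo) : list pt := map toR (zero_exp :: A).

Definition inNew (n : nat) (A : list expo) (p : pt) : Prop :=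
  let S := gens A in
  exists mu : nat -> R,
    (forall j, (j < length S)%nat -> 0 <= mu j) /\
    Rsum (length S) mu = 1 /\
    forall i, (i < n)%nat ->
      p i = Rsum (length S) (fun j => mu j * nth j S (fun _ => 0) i).

Definition is_vertex (n : nat) (A : list expo) (v : pt) : Prop :=
  inNew n A v /\
  forall y z t, inNew n A y -> inNew n A z -> 0 < t < 1 ->
    (forall i, (i < n)%nat -> v i = t * y i + (1 - t) * z i) ->
    forall i, (i < n)%nat -> y i = z i.

(* alpha in V_0(f)  (vertices lie among the generators A(f) u {0}) *)
Definition inV0 (n : nat) (A : list expo) (a : expo) : Prop :=
  In a (zero_exp :: A) /\ is_vertex n A (toR a).
Definition inV (n : nat) (A : list expo) (a : expo) : Prop :=
  inV0 n A a /\ nonzero n a.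

(* faces of New_infty(f): intersections with supporting hyperplanes
   (this includes the empty face and the whole polytope) *)
Definition is_face (n : nat) (A : list expo) (G : pt -> Prop) : Prop :=
  exists (w : pt) (c : R),
    (forall y, inNew n A y -> dot n w y <= c) /\
    forall y, G y <-> (inNew n A y /\ dot n w y = c).

Definition inGcal (n : nat) (A : list expo) (G : pt -> Prop) : Prop :=
  is_face n A G /\ (exists y, G y) /\ ~ G (toR zero_exp).

Definition gem_degenerate (n : nat) (A : list expo) (a : expo) : Prop :=
  In a A /\ ~ inV n A a /\ exists G, inGcal n A G /\ G (toR a).

Definition aff_indep (n : nat) (W : list expo) : Prop :=
  forall mu : nat -> R,
    (forall i, (i < n)%nat ->
       Rsum (length W) (fun j => mu j * INR (nth j W zero_exp i)) = 0) ->
    Rsum (length W) mu = 0 ->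
    forall j, (j < length W)%nat -> mu j = 0.

(* map of minimal barycentric coordinates lam : V_0^c(f) x V_0(f) -> [0,1]
   (given as a total function; values outside V_0^c x V_0 are irrelevant) *)
Definition min_bary (n : nat) (A : list expo) (lam : expo -> expo -> R) : Prop :=
  forall s, In s A -> ~ inV0 n A s ->
    (forall a, inV0 n A a -> 0 <= lam s a <= 1) /\
    exists W : list expo,
      NoDup W /\ (forall a, In a W -> inV0 n A a) /\ aff_indep n W /\
      (forall a, In a W -> lam s a > 0) /\
      (forall a, inV0 n A a -> ~ In a W -> lam s a = 0) /\
      (forall i, (i < n)%nat ->
         Rsum (length W) (fun j => lam s (nth j W zero_exp) * INR (nth j W zero_exp i))
         = INR (s i)) /\
      Rsum (length W) (fun j => lam s (nth j W zero_exp)) = 1.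

Definition decP (P : Prop) : bool :=
  if excluded_middle_informative P then true else false.

(* A(f) u {0} without repetition (0 listed once) *)
Definition gens_exp (n : nat) (A : list expo) : list expo :=
  zero_exp :: filter (nzb n) A.

Definition Theta (n : nat) (A : list expo) (coef : expo -> R)
  (lam : expo -> expo -> R) (s : expo) : R :=
  fold_right Rmult 1
    (map (fun a => if decP (inV0 n A a /\ lam s a > 0)
                   then Rpower (coef a / lam s a) (lam s a) else 1)
         (gens_exp n A)).

Definition gem_sum (n : nat) (A : list expo) (coef : expo -> R)
  (lam : expo -> expo -> R) : R :=
  fold_right Rplus 0
    (map (fun s => if decP (gem_degenerate n A s) then
                     (if all_even n s
                      then - (Rmin 0 (coef s) / Theta n A coef lam s)
                      else Rabs (coef s) / Theta n A coef lam s)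
                   else 0) A).

Definition condC1 (n : nat) (A : list expo) : Prop :=
  forall a, inV n A a -> all_even n a = true.
Definition condC2 (n : nat) (A : list expo) (coef : expo -> R) : Prop :=
  forall a, inV n A a -> coef a > 0.
Definition condC3 (n : nat) (A : list expo) : Prop :=
  forall i, (i < n)%nat -> exists k : nat, (1 <= k)%nat /\
    exists a, inV n A a /\ a i = (2 * k)%nat /\
      forall j, (j < n)%nat -> j <> i -> a j = 0%nat.

Definition coercive (n : nat) (A : list expo) (coef : expo -> R) : Prop :=
  forall M : R, exists r : R, forall x : pt, norm n x > r -> eval n A coef x > M.

From Pilot Require Import Defs.
From Stdlib Require Import Reals Lra Lia List Permutation Classical ClassicalEpsilon FunctionalExtensionality.
Import ListNotations.
Open Scope R_scope.

(* Write P(x) for the vertex part sum_{a in V(f)} f_a |x|^a, which is nonnegative by (C2)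
   and tends to infinity with |x| by (C3).  By (C1) the vertex monomials of f equal their
   absolute values, so f(x) >= P(x) minus the remaining terms.
   A gem degenerate exponent s lies on a face of New_infty(f) avoiding 0, so its minimal
   barycentric coordinates only involve nonzero vertices, and weighted AM-GM gives
   Theta(f, lambda_f, s) |x|^s <= P(x): the degenerate terms cost at most gem_sum * P(x).
   Any other non-vertex exponent is, by Farkas' lemma, a nonnegative combination of
   exponents of f of total weight sg < 1; since every |x|^a with a in A(f) u {0} is at most
   1 + P(x)/c0 (finite Krein-Milman), such a term is O(P(x)^sg) = o(P(x)).  Hence
   f >= (1 - gem_sum)/2 * P - Z, which tends to infinity. *)

Lemma Rsum_0 g : Rsum 0 g = 0.
Proof. reflexivity. Qed.

Lemma Rsum_shift m g : Rsum (S m) g = g 0%nat + Rsum m (fun j => g (S j)).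
Proof. unfold Rsum. simpl. f_equal. rewrite <- seq_shift, map_map. reflexivity. Qed.

Lemma Rsum_S m g : Rsum (S m) g = Rsum m g + g m.
Proof.
  revert g; induction m; intro g.
  - rewrite Rsum_shift, !Rsum_0. lra.
  - rewrite Rsum_shift, IHm, Rsum_shift. lra.
Qed.

Lemma Rsum_ext m g h : (forall j, (j < m)%nat -> g j = h j) -> Rsum m g = Rsum m h.
Proof.
  induction m; intro H. reflexivity.
  rewrite !Rsum_S, IHm by (intros; apply H; lia). rewrite H by lia. reflexivity.
Qed.

Lemma Rsum_plus m g h : Rsum m (fun j => g j + h j) = Rsum m g + Rsum m h.
Proof. induction m. rewrite !Rsum_0; lra. rewrite !Rsum_S, IHm. lra. Qed.

Lemma Rsum_minus m g h : Rsum m (fun j => g j - h j) = Rsum m g - Rsum m h.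
Proof. induction m. rewrite !Rsum_0; lra. rewrite !Rsum_S, IHm. lra. Qed.

Lemma Rsum_scal m c g : Rsum m (fun j => c * g j) = c * Rsum m g.
Proof. induction m. rewrite !Rsum_0; lra. rewrite !Rsum_S, IHm. lra. Qed.

Lemma Rsum_scal_r m c g : Rsum m (fun j => g j * c) = Rsum m g * c.
Proof. induction m. rewrite !Rsum_0; lra. rewrite !Rsum_S, IHm. lra. Qed.

Lemma Rsum_const m c : Rsum m (fun _ => c) = INR m * c.
Proof. induction m. rewrite Rsum_0. simpl. ring. rewrite Rsum_S, IHm, S_INR. ring. Qed.

Lemma Rsum_le m g h : (forall j, (j < m)%nat -> g j <= h j) -> Rsum m g <= Rsum m h.
Proof.
  induction m; intro H. rewrite !Rsum_0; lra.
  rewrite !Rsum_S. assert (g m <= h m) by (apply H; lia).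
  assert (Rsum m g <= Rsum m h) by (apply IHm; intros; apply H; lia). lra.
Qed.

Lemma Rsum_zero m g : (forall j, (j < m)%nat -> g j = 0) -> Rsum m g = 0.
Proof.
  intro H. rewrite (Rsum_ext m g (fun _ => 0)), Rsum_const by auto. ring.
Qed.

Lemma Rsum_nonneg m g : (forall j, (j < m)%nat -> 0 <= g j) -> 0 <= Rsum m g.
Proof. intro H. rewrite <- (Rsum_zero m (fun _ => 0)) by auto. apply Rsum_le. auto. Qed.

Lemma Rsum_ge_term m g k : (k < m)%nat -> (forall j, (j < m)%nat -> 0 <= g j) ->
  g k <= Rsum m g.
Proof.
  induction m; intros Hk H. lia.
  rewrite Rsum_S. destruct (Nat.eq_dec k m).
  - subst. assert (0 <= Rsum m g) by (apply Rsum_nonneg; intros; apply H; lia). lra.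
  - assert (g k <= Rsum m g) by (apply IHm; [lia| intros; apply H; lia]).
    assert (0 <= g m) by (apply H; lia). lra.
Qed.

Lemma Rsum_nonneg_eq0 m g : (forall j, (j < m)%nat -> 0 <= g j) -> Rsum m g = 0 ->
  forall j, (j < m)%nat -> g j = 0.
Proof.
  intros H Hs j Hj. pose proof (Rsum_ge_term m g j Hj H). pose proof (H j Hj). lra.
Qed.

Lemma Rsum_swap m k F :
  Rsum m (fun i => Rsum k (fun j => F i j)) = Rsum k (fun j => Rsum m (fun i => F i j)).
Proof.
  induction m.
  - rewrite Rsum_0. symmetry. apply Rsum_zero. intros. apply Rsum_0.
  - rewrite Rsum_S, IHm, <- Rsum_plus. apply Rsum_ext. intros. rewrite Rsum_S. reflexivity.
Qed.

Lemma Rsum_indicator m k (F : nat -> R) : (k < m)%nat ->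
  Rsum m (fun j => (if Nat.eqb j k then 1 else 0) * F j) = F k.
Proof.
  induction m; intro Hk. lia.
  rewrite Rsum_S. destruct (Nat.eq_dec k m).
  - subst. rewrite Nat.eqb_refl, Rsum_zero. ring.
    intros j Hj. destruct (Nat.eqb_spec j m). lia. ring.
  - rewrite IHm by lia. destruct (Nat.eqb_spec m k). lia. ring.
Qed.

Lemma Rsum_mean_eq_max m (mu d : nat -> R) c :
  (forall j, (j < m)%nat -> 0 <= mu j) -> (forall j, (j < m)%nat -> d j <= c) ->
  Rsum m mu = 1 -> Rsum m (fun j => mu j * d j) = c ->
  forall j, (j < m)%nat -> mu j = 0 \/ d j = c.
Proof.
  intros Hmu Hd Hs Hc j Hj.
  assert (Hz : forall j, (j < m)%nat -> mu j * (c - d j) = 0).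
  { apply Rsum_nonneg_eq0.
    - intros k Hk. apply Rmult_le_pos; [auto|]. specialize (Hd k Hk). lra.
    - rewrite (Rsum_ext _ _ (fun k => c * mu k - mu k * d k)) by (intros; ring).
      rewrite Rsum_minus, Rsum_scal, Hs, Hc. ring. }
  destruct (Rmult_integral _ _ (Hz j Hj)); [left|right]; lra.
Qed.

Definition lsum {T} (L : list T) (h : T -> R) : R := fold_right Rplus 0 (map h L).

Lemma lsum_cons {T} (a : T) L h : lsum (a :: L) h = h a + lsum L h.
Proof. reflexivity. Qed.

Lemma Rsum_nth {T} (L : list T) d h :
  Rsum (length L) (fun j => h (nth j L d)) = lsum L h.
Proof.
  induction L. reflexivity.
  simpl length. rewrite Rsum_shift, lsum_cons. simpl. rewrite IHL. reflexivity.
Qed.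

Lemma lsum_perm {T} (L L' : list T) h : Permutation L L' -> lsum L h = lsum L' h.
Proof.
  induction 1; try reflexivity.
  - rewrite !lsum_cons, IHPermutation. reflexivity.
  - rewrite !lsum_cons. lra.
  - congruence.
Qed.

Lemma lsum_ext {T} (L : list T) g h : (forall a, In a L -> g a = h a) -> lsum L g = lsum L h.
Proof.
  induction L; intro H. reflexivity.
  rewrite !lsum_cons, H, IHL; [reflexivity | intros; apply H | ]; simpl; auto.
Qed.

Lemma lsum_le {T} (L : list T) g h : (forall a, In a L -> g a <= h a) -> lsum L g <= lsum L h.
Proof.
  induction L; intro H. unfold lsum; simpl; lra. rewrite !lsum_cons.
  assert (g a <= h a) by (apply H; simpl; auto).
  assert (lsum L g <= lsum L h) by (apply IHL; intros; apply H; simpl; auto). lra.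
Qed.

Lemma lsum_nonneg {T} (L : list T) h : (forall a, In a L -> 0 <= h a) -> 0 <= lsum L h.
Proof.
  induction L; intro H. unfold lsum; simpl; lra. rewrite lsum_cons.
  assert (0 <= h a) by (apply H; simpl; auto).
  assert (0 <= lsum L h) by (apply IHL; intros; apply H; simpl; auto). lra.
Qed.

Lemma lsum_minus {T} (L : list T) g h : lsum L (fun a => g a - h a) = lsum L g - lsum L h.
Proof. induction L. unfold lsum; simpl; lra. rewrite !lsum_cons, IHL. lra. Qed.

Lemma lsum_scal_r {T} (L : list T) c h : lsum L (fun a => h a * c) = lsum L h * c.
Proof. induction L. unfold lsum; simpl; lra. rewrite !lsum_cons, IHL. lra. Qed.

Lemma lsum_ge_term {T} (L : list T) h a : In a L -> (forall b, In b L -> 0 <= h b) ->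
  h a <= lsum L h.
Proof.
  induction L; intros Ha H. destruct Ha.
  rewrite lsum_cons. destruct Ha as [<-|Ha].
  - assert (0 <= lsum L h) by (apply lsum_nonneg; intros; apply H; simpl; auto). lra.
  - assert (h a <= lsum L h) by (apply IHL; auto; intros; apply H; simpl; auto).
    assert (0 <= h a0) by (apply H; simpl; auto). lra.
Qed.

Lemma lsum_incl_le {T} (W L : list T) h : NoDup W -> incl W L ->
  (forall b, In b L -> 0 <= h b) -> lsum W h <= lsum L h.
Proof.
  revert W. induction L as [|b L IH]; intros W HW Hinc H.
  - destruct W. unfold lsum; simpl; lra. exfalso. apply (Hinc t). simpl; auto.
  - rewrite lsum_cons. destruct (classic (In b W)) as [Hb|Hb].
    + apply in_split in Hb. destruct Hb as [W1 [W2 ->]].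
      rewrite (lsum_perm _ (b :: W1 ++ W2)) by (symmetry; apply Permutation_middle).
      rewrite lsum_cons.
      assert (lsum (W1 ++ W2) h <= lsum L h).
      { apply IH.
        - exact (NoDup_remove_1 _ _ _ HW).
        - intros x Hx. destruct (Hinc x) as [<-|]; auto.
          + apply in_or_app. apply in_app_or in Hx. simpl; tauto.
          + exfalso. exact (NoDup_remove_2 _ _ _ HW Hx).
        - intros; apply H; simpl; auto. }
      lra.
    + assert (lsum W h <= lsum L h).
      { apply IH; auto. intros x Hx. destruct (Hinc x Hx) as [<-|]; tauto.
        intros; apply H; simpl; auto. }
      assert (0 <= h b) by (apply H; simpl; auto). lra.
Qed.

Lemma lsum_filter {T} (L : list T) (p : T -> bool) h :
  lsum L (fun a => if p a then h a else 0) = lsum (filter p L) h.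
Proof.
  induction L. reflexivity. simpl. rewrite lsum_cons, IHL. destruct (p a). reflexivity. lra.
Qed.

Lemma prod_Rpower_exp {T} (L : list T) (p : T -> bool) (x y : T -> R) :
  fold_right Rmult 1 (map (fun a => if p a then Rpower (x a) (y a) else 1) L)
  = exp (lsum L (fun a => if p a then y a * ln (x a) else 0)).
Proof.
  induction L. simpl. unfold lsum; simpl. rewrite exp_0; reflexivity.
  simpl. rewrite IHL, lsum_cons, exp_plus. destruct (p a). reflexivity. rewrite exp_0. lra.
Qed.

Lemma Rprod_S m g : Rprod (S m) g = Rprod m g * g m.
Proof.
  unfold Rprod. rewrite seq_S, map_app, fold_right_app. simpl.
  induction (map g (seq 0 m)); simpl; [ring|]. rewrite IHl. ring.
Qed.

Lemma Rprod_ext m g h : (forall j, (j < m)%nat -> g j = h j) -> Rprod m g = Rprod m h.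
Proof.
  induction m; intro H. reflexivity.
  rewrite !Rprod_S, IHm by (intros; apply H; lia). rewrite H by lia. reflexivity.
Qed.

Lemma Rprod_indicator m k c : (k < m)%nat -> Rprod m (fun j => if Nat.eqb j k then c else 1) = c.
Proof.
  induction m; intro Hk; [lia|].
  rewrite Rprod_S. destruct (Nat.eq_dec k m).
  - subst. rewrite Nat.eqb_refl, (Rprod_ext m _ (fun _ => 1)).
    + replace (Rprod m (fun _ => 1)) with 1; [ring|].
      clear. induction m; [reflexivity|]. rewrite Rprod_S, <- IHm. ring.
    + intros j Hj. destruct (Nat.eqb_spec j m); [lia|reflexivity].
  - rewrite IHm by lia. destruct (Nat.eqb_spec m k); [lia|ring].
Qed.

Lemma dot_S d y u : dot (S d) y u = dot d y u + y d * u d.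
Proof. unfold dot. rewrite Rsum_S. reflexivity. Qed.

Lemma dot_eq_on d y u v : (forall i, (i < d)%nat -> u i = v i) -> dot d y u = dot d y v.
Proof. intro H. unfold dot. apply Rsum_ext. intros. rewrite H; auto. Qed.

Lemma dot_lin_r d y (u v : pt) c :
  dot d y (fun i => u i - c * v i) = dot d y u - c * dot d y v.
Proof. unfold dot. rewrite <- Rsum_scal, <- Rsum_minus. apply Rsum_ext. intros. ring. Qed.

Lemma dot_lin_l d (u v : pt) c w :
  dot d (fun i => u i - c * v i) w = dot d u w - c * dot d v w.
Proof. unfold dot. rewrite <- Rsum_scal, <- Rsum_minus. apply Rsum_ext. intros. ring. Qed.

Lemma dot_opp_l d (y u : pt) : dot d (fun i => - y i) u = - dot d y u.
Proof.
  unfold dot. rewrite (Rsum_ext _ _ (fun i => -1 * (y i * u i))) by (intros; ring).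
  rewrite Rsum_scal. ring.
Qed.

Lemma dot_opp_r d (y u : pt) : dot d y (fun i => - u i) = - dot d y u.
Proof.
  unfold dot. rewrite (Rsum_ext _ _ (fun i => -1 * (y i * u i))) by (intros; ring).
  rewrite Rsum_scal. ring.
Qed.

Lemma dot_scal_l d c (y u : pt) : dot d (fun i => c * y i) u = c * dot d y u.
Proof.
  unfold dot. rewrite <- Rsum_scal. apply Rsum_ext. intros; ring.
Qed.

Lemma dot_comb d m (w p : pt) (mu : nat -> R) (G : nat -> pt) :
  (forall i, (i < d)%nat -> p i = Rsum m (fun j => mu j * G j i)) ->
  dot d w p = Rsum m (fun j => mu j * dot d w (G j)).
Proof.
  intro H. unfold dot.
  rewrite (Rsum_ext d _ (fun i => Rsum m (fun j => w i * (mu j * G j i)))).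
  - rewrite Rsum_swap. apply Rsum_ext. intros j _. rewrite <- Rsum_scal. apply Rsum_ext.
    intros; ring.
  - intros i Hi. rewrite H by auto. rewrite <- Rsum_scal. reflexivity.
Qed.

(** * Farkas' lemma *)

Definition cone_feasible d m (C : nat -> pt) (b : pt) :=
  exists mu : nat -> R, (forall j, (j < m)%nat -> 0 <= mu j) /\
    forall i, (i < d)%nat -> Rsum m (fun j => mu j * C j i) = b i.

Definition farkas_certificate d m (C : nat -> pt) (b : pt) :=
  exists y, (forall j, (j < m)%nat -> 0 <= dot d y (C j)) /\ dot d y b < 0.

Lemma farkas_no_columns d C b : cone_feasible d 0 C b \/ farkas_certificate d 0 C b.
Proof.
  destruct (classic (forall i, (i < d)%nat -> b i = 0)) as [H|H].
  - left. exists (fun _ => 0). split; [intros; lra|]. intros. rewrite Rsum_0, H; auto.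
  - right. exists (fun i => - b i). split; [intros; lia|].
    apply not_all_ex_not in H. destruct H as [k Hk].
    apply imply_to_and in Hk. destruct Hk as [Hk Hbk].
    rewrite dot_opp_l. unfold dot.
    assert (b k * b k <= Rsum d (fun i => b i * b i))
      by (apply (Rsum_ge_term d (fun i => b i * b i) k Hk); intros; nra).
    assert (0 < b k * b k) by nra. lra.
Qed.

(* Eliminating the column [C 0] along a functional [y] with [y . C 0 < 0]: projecting
   every vector onto the hyperplane [y . u = 0] parallel to [C 0] reduces the
   number of columns by one. *)
Section FarkasElimination.
Variables (d m : nat) (C : nat -> pt) (b y : pt).
Hypothesis y_C0_neg : dot d y (C 0%nat) < 0.

Definition elim_proj (u : pt) : pt := fun i => u i - (dot d y u / dot d y (C 0%nat)) * C 0%nat i.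
Definition elim_lift (z : pt) : pt := fun i => z i - (dot d z (C 0%nat) / dot d y (C 0%nat)) * y i.

Lemma dot_lift_proj z u : dot d (elim_lift z) u = dot d z (elim_proj u).
Proof. unfold elim_lift, elim_proj. rewrite dot_lin_l, dot_lin_r. field. lra. Qed.

Lemma cone_feasible_of_proj :
  (forall j, (j < m)%nat -> 0 <= dot d y (C (S j))) -> dot d y b < 0 ->
  cone_feasible d m (fun j => elim_proj (C (S j))) (elim_proj b) -> cone_feasible d (S m) C b.
Proof.
  intros Hy Hb [mu [Hmu Hsum]].
  set (al := dot d y (C 0%nat)).
  set (th := dot d y b / al - Rsum m (fun j => mu j * dot d y (C (S j)) / al)).
  exists (fun j => match j with O => th | S j' => mu j' end). split.
  - intros [|j] Hj; [|apply Hmu; lia].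
    assert (0 < dot d y b / al) by (apply Rdiv_neg_neg; auto).
    assert (Rsum m (fun j => mu j * dot d y (C (S j)) / al) <= 0).
    { rewrite <- (Rsum_zero m (fun _ => 0)) by auto. apply Rsum_le. intros j Hj'.
      assert (0 <= mu j * dot d y (C (S j))) by (apply Rmult_le_pos; auto).
      assert (/ al < 0) by (apply Rinv_lt_0_compat; auto).
      unfold Rdiv. nra. }
    unfold th. lra.
  - intros i Hi. rewrite Rsum_shift. specialize (Hsum i Hi). unfold elim_proj in Hsum.
    rewrite (Rsum_ext _ _ (fun j => mu j * C (S j) i
               - (mu j * dot d y (C (S j)) / al) * C 0%nat i)) in Hsum
      by (intros; unfold al, Rdiv; ring).
    rewrite Rsum_minus, Rsum_scal_r in Hsum. unfold th. fold al in Hsum. lra.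
Qed.

Lemma certificate_of_proj :
  farkas_certificate d m (fun j => elim_proj (C (S j))) (elim_proj b) -> farkas_certificate d (S m) C b.
Proof.
  intros [z [Hz Hzb]]. exists (elim_lift z).
  split; [|rewrite dot_lift_proj; exact Hzb].
  intros [|j] Hj; rewrite dot_lift_proj; [|apply Hz; lia].
  unfold elim_proj. rewrite dot_lin_r. assert (dot d y (C 0%nat) <> 0) by lra.
  unfold Rdiv. rewrite Rinv_r by auto. lra.
Qed.

End FarkasElimination.

Lemma farkas d m : forall (C : nat -> pt) (b : pt),
  cone_feasible d m C b \/ farkas_certificate d m C b.
Proof.
  induction m; intros C b; [apply farkas_no_columns|].
  destruct (classic (cone_feasible d (S m) C b)) as [Hf|Hf]; [left; exact Hf|right].
  destruct (IHm (fun j => C (S j)) b) as [[mu [Hmu Hsum]]|[y [Hy Hyb]]].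
  { exfalso. apply Hf.
    exists (fun j => match j with O => 0 | S j' => mu j' end). split.
    - intros [|j] Hj; [lra|apply Hmu; lia].
    - intros i Hi. rewrite Rsum_shift, <- Hsum by auto. lra. }
  destruct (Rle_or_lt 0 (dot d y (C 0%nat))) as [Hal|Hal].
  { exists y. split; auto. intros [|j] Hj; [auto|apply Hy; lia]. }
  destruct (IHm (fun j => elim_proj d C y (C (S j))) (elim_proj d C y b)) as [H|H].
  - exfalso. exact (Hf (cone_feasible_of_proj d m C b y Hal Hy Hyb H)).
  - exact (certificate_of_proj d m C b y Hal H).
Qed.

(* Affine conditions on points of [R^d] are encoded as cone conditions on [R^(d+1)]
   (and [R^(d+2)]) by appending coordinates. *)
Definition ext_pt d (u : pt) (t : R) : pt := fun i => if Nat.ltb i d then u i else t.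

Definition ext_pt2 d (u : pt) (t1 t2 : R) : pt := ext_pt (S d) (ext_pt d u t1) t2.

Lemma ext_pt_lt d u t i : (i < d)%nat -> ext_pt d u t i = u i.
Proof. intro H. unfold ext_pt. destruct (Nat.ltb_spec i d); [reflexivity|lia]. Qed.

Lemma ext_pt_last d u t : ext_pt d u t d = t.
Proof. unfold ext_pt. rewrite Nat.ltb_irrefl. reflexivity. Qed.

Lemma ext_pt2_lt d u t1 t2 i : (i < d)%nat -> ext_pt2 d u t1 t2 i = u i.
Proof. intro H. unfold ext_pt2. rewrite !ext_pt_lt by lia. reflexivity. Qed.

Lemma ext_pt2_d d u t1 t2 : ext_pt2 d u t1 t2 d = t1.
Proof. unfold ext_pt2. rewrite ext_pt_lt, ext_pt_last by lia. reflexivity. Qed.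

Lemma ext_pt2_Sd d u t1 t2 : ext_pt2 d u t1 t2 (S d) = t2.
Proof. apply ext_pt_last. Qed.

Lemma dot_ext_pt d y u t : dot (S d) y (ext_pt d u t) = dot d y u + y d * t.
Proof.
  rewrite dot_S, ext_pt_last. f_equal. apply dot_eq_on. intros. apply ext_pt_lt; auto.
Qed.

Lemma dot_ext_pt2 d y u t1 t2 :
  dot (S (S d)) y (ext_pt2 d u t1 t2) = dot d y u + y d * t1 + y (S d) * t2.
Proof. unfold ext_pt2. rewrite !dot_ext_pt. reflexivity. Qed.

Lemma convex_alternative d m (G : nat -> pt) (b : pt) :
  (exists mu : nat -> R, (forall j, (j < m)%nat -> 0 <= mu j) /\ Rsum m mu = 1 /\
     forall i, (i < d)%nat -> b i = Rsum m (fun j => mu j * G j i)) \/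
  exists w c, (forall j, (j < m)%nat -> dot d w (G j) <= c) /\ c < dot d w b.
Proof.
  destruct (farkas (S d) m (fun j => ext_pt d (G j) 1) (ext_pt d b 1))
    as [[mu [Hmu Hs]]|[y [Hy Hyb]]].
  - left. exists mu. split; [exact Hmu|split].
    + specialize (Hs d (Nat.lt_succ_diag_r d)). rewrite ext_pt_last in Hs. rewrite <- Hs.
      apply Rsum_ext. intros. rewrite ext_pt_last. ring.
    + intros i Hi. rewrite <- (ext_pt_lt d b 1 i Hi), <- Hs by lia.
      apply Rsum_ext. intros. rewrite ext_pt_lt; auto.
  - right. exists (fun i => - y i), (y d). split.
    + intros j Hj. specialize (Hy j Hj). rewrite dot_ext_pt in Hy. rewrite dot_opp_l. lra.
    + rewrite dot_ext_pt in Hyb. rewrite dot_opp_l. lra.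
Qed.

(* Homogenized system: [sum_j mu_j (G_j, 1, 0) + mu_m (0, 1, 1) + t (-b, -1, 0) = (0, 0, 1)]
   forces [mu_m = 1] and [t = 1 + sum_j mu_j > 0], so [b = sum_j (mu_j / t) G_j] with
   weights summing to [1 - 1/t < 1]. *)
Section SubconvexAlternative.
Variables (d m : nat) (G : nat -> pt) (b : pt).

Definition subconvex_col (j : nat) : pt :=
  if Nat.ltb j m then ext_pt2 d (G j) 1 0
  else if Nat.eqb j m then ext_pt2 d (fun _ => 0) 1 1
  else ext_pt2 d (fun i => - b i) (-1) 0.

Lemma subconvex_col_lt j : (j < m)%nat -> subconvex_col j = ext_pt2 d (G j) 1 0.
Proof. intro Hj. unfold subconvex_col. destruct (Nat.ltb_spec j m); [reflexivity|lia]. Qed.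

Lemma subconvex_col_m : subconvex_col m = ext_pt2 d (fun _ => 0) 1 1.
Proof. unfold subconvex_col. rewrite Nat.ltb_irrefl, Nat.eqb_refl. reflexivity. Qed.

Lemma subconvex_col_Sm : subconvex_col (S m) = ext_pt2 d (fun i => - b i) (-1) 0.
Proof.
  unfold subconvex_col. destruct (Nat.ltb_spec (S m) m); [lia|].
  destruct (Nat.eqb_spec (S m) m); [lia|reflexivity].
Qed.

Lemma subconvex_of_feasible :
  cone_feasible (S (S d)) (S (S m)) subconvex_col (ext_pt2 d (fun _ => 0) 0 1) ->
  exists mu : nat -> R, (forall j, (j < m)%nat -> 0 <= mu j) /\ Rsum m mu < 1 /\
    forall i, (i < d)%nat -> b i = Rsum m (fun j => mu j * G j i).
Proof.
  intros [mu [Hmu Hs]].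
  assert (Hsum : forall i, (i < S (S d))%nat ->
    Rsum m (fun j => mu j * ext_pt2 d (G j) 1 0 i) + mu m * ext_pt2 d (fun _ => 0) 1 1 i
    + mu (S m) * ext_pt2 d (fun i => - b i) (-1) 0 i = ext_pt2 d (fun _ => 0) 0 1 i).
  { intros i Hi. rewrite <- (Hs i Hi), !Rsum_S, subconvex_col_m, subconvex_col_Sm.
    f_equal. f_equal. apply Rsum_ext. intros j Hj. rewrite subconvex_col_lt; auto. }
  assert (HSd := Hsum (S d) ltac:(lia)). assert (Hd := Hsum d ltac:(lia)).
  rewrite (Rsum_ext _ _ (fun _ => 0)), Rsum_const in HSd by (intros; rewrite ext_pt2_Sd; ring).
  rewrite (Rsum_ext _ _ mu) in Hd by (intros; rewrite ext_pt2_d; ring).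
  rewrite !ext_pt2_Sd in HSd. rewrite !ext_pt2_d in Hd.
  set (t := mu (S m)) in *.
  assert (Hm0 : 0 <= Rsum m mu) by (apply Rsum_nonneg; intros; apply Hmu; lia).
  assert (Ht : 0 < t) by lra.
  exists (fun j => / t * mu j). split; [|split].
  - intros j Hj. apply Rmult_le_pos; [left; apply Rinv_0_lt_compat; auto|apply Hmu; lia].
  - rewrite Rsum_scal. apply (Rmult_lt_reg_l t); auto.
    rewrite <- Rmult_assoc, Rinv_r, Rmult_1_l by lra. lra.
  - intros i Hi. specialize (Hsum i ltac:(lia)).
    rewrite (Rsum_ext _ _ (fun j => mu j * G j i)) in Hsum by (intros; rewrite ext_pt2_lt; auto).
    rewrite !ext_pt2_lt in Hsum by auto.
    rewrite (Rsum_ext _ _ (fun j => / t * (mu j * G j i))) by (intros; ring).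
    rewrite Rsum_scal. fold t in Hsum.
    replace (Rsum m (fun j => mu j * G j i)) with (t * b i) by lra. field. lra.
Qed.

Lemma separator_of_certificate :
  farkas_certificate (S (S d)) (S (S m)) subconvex_col (ext_pt2 d (fun _ => 0) 0 1) ->
  exists v, (forall j, (j < m)%nat -> dot d v (G j) <= 1) /\ 1 <= dot d v b.
Proof.
  intros [y [Hy Hyb]].
  assert (HSm := Hy (S m) ltac:(lia)). assert (Hm := Hy m ltac:(lia)).
  rewrite subconvex_col_Sm, dot_ext_pt2, dot_opp_r in HSm.
  rewrite subconvex_col_m, dot_ext_pt2 in Hm. rewrite dot_ext_pt2 in Hyb.
  assert (H0 : dot d y (fun _ => 0) = 0) by (unfold dot; apply Rsum_zero; intros; ring).
  rewrite H0 in Hm, Hyb.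
  assert (Hpos : 0 < y d) by lra.
  exists (fun i => (- / y d) * y i). split.
  - intros j Hj. specialize (Hy j ltac:(lia)). rewrite subconvex_col_lt, dot_ext_pt2 in Hy by auto.
    rewrite dot_scal_l. apply (Rmult_le_reg_l (y d)); auto. field_simplify; lra.
  - rewrite dot_scal_l. apply (Rmult_le_reg_l (y d)); auto. field_simplify; lra.
Qed.

Lemma subconvex_alternative :
  (exists mu : nat -> R, (forall j, (j < m)%nat -> 0 <= mu j) /\ Rsum m mu < 1 /\
     forall i, (i < d)%nat -> b i = Rsum m (fun j => mu j * G j i)) \/
  exists v, (forall j, (j < m)%nat -> dot d v (G j) <= 1) /\ 1 <= dot d v b.
Proof.
  destruct (farkas (S (S d)) (S (S m)) subconvex_col (ext_pt2 d (fun _ => 0) 0 1)) as [H|H].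
  - left. apply subconvex_of_feasible, H.
  - right. apply separator_of_certificate, H.
Qed.

End SubconvexAlternative.

Lemma decP_true (P : Prop) : P -> decP P = true.
Proof. intro H. unfold decP. destruct (excluded_middle_informative P); [reflexivity|contradiction]. Qed.

Lemma decP_false (P : Prop) : ~ P -> decP P = false.
Proof. intro H. unfold decP. destruct (excluded_middle_informative P); [contradiction|reflexivity]. Qed.

Lemma decP_spec (P : Prop) : decP P = true -> P.
Proof. unfold decP. destruct (excluded_middle_informative P); [auto|discriminate]. Qed.

Definition sq d (q : pt) := Rsum d (fun i => q i * q i).

Lemma sq_convex_comb_le d m (mu : nat -> R) (G : nat -> pt) (y : pt) :
  (forall j, (j < m)%nat -> 0 <= mu j) -> Rsum m mu = 1 ->
  (forall i, (i < d)%nat -> y i = Rsum m (fun j => mu j * G j i)) ->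
  sq d y <= Rsum m (fun j => mu j * sq d (G j)).
Proof.
  intros Hmu Hs Hy. unfold sq.
  rewrite (Rsum_ext m _ (fun j => Rsum d (fun i => mu j * (G j i * G j i))))
    by (intros; rewrite Rsum_scal; reflexivity).
  rewrite <- Rsum_swap. apply Rsum_le. intros i Hi.
  assert (0 <= Rsum m (fun j => mu j * ((G j i - y i) * (G j i - y i)))).
  { apply Rsum_nonneg. intros j Hj. apply Rmult_le_pos; [auto|apply Rle_0_sqr]. }
  rewrite (Rsum_ext m _ (fun j => (mu j * (G j i * G j i) - 2 * y i * (mu j * G j i))
                                   + y i * y i * mu j)) in H by (intros; ring).
  rewrite Rsum_plus, Rsum_minus, !Rsum_scal, Hs, <- Hy in H by auto. lra.
Qed.

Lemma sq_strict_convex d t (p y z : pt) : 0 < t < 1 ->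
  (forall i, (i < d)%nat -> p i = t * y i + (1 - t) * z i) ->
  sq d y <= sq d p -> sq d z <= sq d p -> forall i, (i < d)%nat -> y i = z i.
Proof.
  intros Ht Hc Hy Hz.
  set (D := Rsum d (fun i => (y i - z i) * (y i - z i))).
  assert (Hsp : sq d p = t * sq d y + (1 - t) * sq d z - t * (1 - t) * D).
  { unfold sq, D. rewrite <- !Rsum_scal, <- Rsum_plus, <- Rsum_minus.
    apply Rsum_ext. intros i Hi. rewrite Hc by auto. ring. }
  assert (HD : 0 <= D) by (apply Rsum_nonneg; intros; apply Rle_0_sqr).
  assert (HD0 : D = 0).
  { assert (0 < t * (1 - t)) by (apply Rmult_lt_0_compat; lra).
    assert (t * sq d y <= t * sq d p) by (apply Rmult_le_compat_l; lra).
    assert ((1 - t) * sq d z <= (1 - t) * sq d p) by (apply Rmult_le_compat_l; lra).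
    nra. }
  intros i Hi.
  pose proof (Rsum_nonneg_eq0 d _ (fun j _ => Rle_0_sqr (y j - z j)) HD0 i Hi) as E.
  cbv beta in E. apply Rmult_integral in E. destruct E; lra.
Qed.

Lemma list_lexmax {T} (L : list T) (f1 f2 : T -> R) : L <> [] ->
  exists p, In p L /\ forall g, In g L -> f1 g < f1 p \/ (f1 g = f1 p /\ f2 g <= f2 p).
Proof.
  induction L as [|a L IH]; intro H; [congruence|].
  destruct L as [|b L'].
  { exists a. split; [simpl; auto|]. intros g [<-|[]]. right; split; lra. }
  destruct IH as [p [Hp Hg]]; [congruence|].
  destruct (classic (f1 a < f1 p \/ (f1 a = f1 p /\ f2 a <= f2 p))) as [Ha|Ha].
  - exists p. split; [simpl; auto|]. intros g [<-|Hg']; auto.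
  - exists a. split; [simpl; auto|]. intros g [<-|Hg']; [right; split; lra|].
    specialize (Hg g Hg'). apply not_or_and in Ha. destruct Ha as [Ha1 Ha2].
    destruct (Rtotal_order (f1 a) (f1 p)) as [?|[?|?]]; [lra| |destruct Hg as [?|[? ?]]; lra].
    assert (f2 p < f2 a) by (apply Rnot_le_lt; intro; apply Ha2; auto).
    destruct Hg as [?|[? ?]]; [left|right; split]; lra.
Qed.

Lemma toR_zero : toR zero_exp = (fun _ => 0).
Proof. apply functional_extensionality. intro. reflexivity. Qed.

Lemma dot_toR_vanishing d w a : (forall i, (i < d)%nat -> a i = 0%nat) -> dot d w (toR a) = 0.
Proof. intro H. unfold dot. apply Rsum_zero. intros. unfold toR. rewrite H by auto. simpl. ring. Qed.

Lemma dot_toR_zero d w : dot d w (toR zero_exp) = 0.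
Proof. apply dot_toR_vanishing. reflexivity. Qed.

Lemma vanishing_of_not_nonzero d a : ~ Defs.nonzero d a -> forall i, (i < d)%nat -> a i = 0%nat.
Proof. intros H i Hi. apply NNPP. intro. apply H. exists i. auto. Qed.

Lemma gens_length A : length (gens A) = S (length A).
Proof. unfold gens. rewrite length_map. reflexivity. Qed.

Lemma gens_nth A j : nth j (gens A) (fun _ => 0) = toR (nth j (zero_exp :: A) zero_exp).
Proof. unfold gens. rewrite <- toR_zero. apply map_nth. Qed.

(** * Vertices and faces of New_infty(f) *)

Section Polytope.
Variables (n : nat) (A : list expo).

Lemma nth_generator_In j : (j < length (gens A))%nat ->
  In (nth j (zero_exp :: A) zero_exp) (zero_exp :: A).
Proof. intro Hj. apply nth_In. rewrite gens_length in Hj. exact Hj. Qed.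

Lemma inNew_generator a : In a (zero_exp :: A) -> inNew n A (toR a).
Proof.
  intro Ha. apply In_nth with (d := zero_exp) in Ha. destruct Ha as [k [Hk Hka]].
  unfold inNew. rewrite gens_length. simpl length in Hk.
  exists (fun j => if Nat.eqb j k then 1 else 0). split; [|split].
  - intros j _. destruct (Nat.eqb j k); lra.
  - rewrite (Rsum_ext _ _ (fun j => (if Nat.eqb j k then 1 else 0) * 1)) by (intros; ring).
    apply Rsum_indicator. auto.
  - intros i Hi. rewrite (Rsum_indicator _ k (fun j => nth j (gens A) (fun _ => 0) i)) by auto.
    rewrite gens_nth, Hka. reflexivity.
Qed.

Lemma inNew_dot_le (w : pt) c p :
  (forall g, In g (zero_exp :: A) -> dot n w (toR g) <= c) -> inNew n A p -> dot n w p <= c.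
Proof.
  intros Hg [mu [Hmu [Hs Hp]]].
  rewrite (dot_comb n _ w p mu (fun j => nth j (gens A) (fun _ => 0))) by auto.
  rewrite <- (Rmult_1_r c), <- Hs, <- Rsum_scal.
  apply Rsum_le. intros j Hj. rewrite gens_nth.
  specialize (Hg _ (nth_generator_In j Hj)). specialize (Hmu j Hj). nra.
Qed.

Definition lex_max (w : pt) (p : expo) :=
  forall g, In g (zero_exp :: A) -> dot n w (toR g) < dot n w (toR p) \/
    (dot n w (toR g) = dot n w (toR p) /\ sq n (toR g) <= sq n (toR p)).

Lemma lex_max_inNew_sq_le w p y : lex_max w p ->
  inNew n A y -> dot n w y = dot n w (toR p) -> sq n y <= sq n (toR p).
Proof.
  intros Hlex [mu [Hmu [Hs Hy]]] Heq.
  set (G := fun j => nth j (gens A) (fun _ => 0)).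
  assert (HG : forall j, G j = toR (nth j (zero_exp :: A) zero_exp)) by apply gens_nth.
  assert (Hface : forall j, (j < length (gens A))%nat ->
                    mu j = 0 \/ dot n w (G j) = dot n w (toR p)).
  { apply (Rsum_mean_eq_max _ mu (fun j => dot n w (G j))); auto.
    - intros j Hj. rewrite HG. destruct (Hlex _ (nth_generator_In j Hj)) as [|[]]; lra.
    - rewrite <- Heq. symmetry. apply dot_comb. auto. }
  eapply Rle_trans; [apply (sq_convex_comb_le n (length (gens A)) mu G y); auto|].
  rewrite <- (Rmult_1_r (sq n (toR p))), <- Hs, <- Rsum_scal.
  apply Rsum_le. intros j Hj. specialize (Hmu j Hj).
  destruct (Hface j Hj) as [H0|Hd]; [rewrite H0; unfold sq; lra|].
  rewrite HG in Hd |- *.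
  destruct (Hlex _ (nth_generator_In j Hj)) as [|[_ Hsq]]; [lra|nra].
Qed.

Lemma lex_max_is_vertex w p : In p (zero_exp :: A) -> lex_max w p -> is_vertex n A (toR p).
Proof.
  intros Hp Hlex. split; [apply inNew_generator; auto|].
  intros y z t Hy Hz Ht Hc.
  assert (Hle : forall q, inNew n A q -> dot n w q <= dot n w (toR p)).
  { intros q Hq. apply inNew_dot_le; auto.
    intros g Hg. destruct (Hlex g Hg) as [|[]]; lra. }
  assert (Hdp : dot n w (toR p) = t * dot n w y + (1 - t) * dot n w z).
  { unfold dot. rewrite <- !Rsum_scal, <- Rsum_plus. apply Rsum_ext.
    intros i Hi. rewrite Hc by auto. ring. }
  pose proof (Hle y Hy). pose proof (Hle z Hz).
  assert (dot n w y = dot n w (toR p)) by nra.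
  assert (dot n w z = dot n w (toR p)) by nra.
  apply (sq_strict_convex n t (toR p)); auto; apply (lex_max_inNew_sq_le w); auto.
Qed.

Lemma exists_maximizing_vertex (w : pt) : exists p, In p (zero_exp :: A) /\
  (forall g, In g (zero_exp :: A) -> dot n w (toR g) <= dot n w (toR p)) /\ inV0 n A p.
Proof.
  destruct (list_lexmax (zero_exp :: A) (fun g => dot n w (toR g)) (fun g => sq n (toR g)))
    as [p [Hp Hlex]]; [congruence|].
  exists p. split; [auto|split].
  - intros g H. destruct (Hlex g H) as [?|[? ?]]; lra.
  - split; [auto|]. apply (lex_max_is_vertex w); auto.
Qed.

Definition vertex_list := filter (fun b => decP (inV0 n A b)) (zero_exp :: A).

Lemma generator_vertex_comb a : In a (zero_exp :: A) ->
  exists mu : nat -> R, (forall j, (j < length vertex_list)%nat -> 0 <= mu j) /\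
    Rsum (length vertex_list) mu = 1 /\
    forall i, (i < n)%nat -> INR (a i) =
      Rsum (length vertex_list) (fun j => mu j * INR (nth j vertex_list zero_exp i)).
Proof.
  intro Ha.
  destruct (convex_alternative n (length vertex_list)
              (fun j => toR (nth j vertex_list zero_exp)) (toR a)) as [H|[w [c [Hw Hc]]]];
    [exact H|exfalso].
  destruct (exists_maximizing_vertex w) as [p [Hp [Hmax Hv]]].
  assert (HpL : In p vertex_list) by (apply filter_In; split; auto; apply decP_true; auto).
  apply In_nth with (d := zero_exp) in HpL. destruct HpL as [j [Hj <-]].
  specialize (Hw j Hj). specialize (Hmax a Ha). lra.
Qed.

(* Otherwise the separating functional [v] exposes a face of New_infty(f) through [beta]
   that avoids [0], i.e. [beta] is gem degenerate. *)
Lemma nondegenerate_subconvex_comb beta : In beta A -> ~ inV n A beta ->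
  ~ gem_degenerate n A beta ->
  exists mu : nat -> R, (forall j, (j < length A)%nat -> 0 <= mu j) /\ Rsum (length A) mu < 1 /\
    forall i, (i < n)%nat -> INR (beta i) =
      Rsum (length A) (fun j => mu j * INR (nth j A zero_exp i)).
Proof.
  intros Hb HnV HnD.
  destruct (subconvex_alternative n (length A) (fun j => toR (nth j A zero_exp)) (toR beta))
    as [H|[v [Hv Hvb]]]; [exact H|exfalso].
  assert (Hg : forall g, In g (zero_exp :: A) -> dot n v (toR g) <= 1).
  { intros g [<-|Hg]; [rewrite dot_toR_zero; lra|].
    apply In_nth with (d := zero_exp) in Hg. destruct Hg as [j [Hj <-]]. auto. }
  assert (Hbeta : dot n v (toR beta) = 1) by (specialize (Hg beta (or_intror Hb)); lra).
  apply HnD. split; [exact Hb|split; [exact HnV|]].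
  exists (fun q => inNew n A q /\ dot n v q = 1).
  assert (Hbeta_in : inNew n A (toR beta)) by (apply inNew_generator; right; auto).
  split; [split; [|split]|split; auto].
  - exists v, 1. split; [intros q Hq; apply inNew_dot_le; auto|tauto].
  - exists (toR beta). auto.
  - intros [_ H0]. rewrite dot_toR_zero in H0. lra.
Qed.

Lemma Gcal_member_nonzero G a : inGcal n A G -> G (toR a) -> Defs.nonzero n a.
Proof.
  intros [[w [c [_ Hiff]]] [_ HG0]] HGa. apply NNPP. intro Hz. apply HG0, Hiff.
  apply Hiff in HGa. split; [apply inNew_generator; left; auto|].
  rewrite dot_toR_zero, <- (proj2 HGa). symmetry.
  apply dot_toR_vanishing, vanishing_of_not_nonzero. exact Hz.
Qed.

Lemma face_contains_comb_support G (s : expo) (W : list expo) (l : expo -> R) :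
  is_face n A G -> G (toR s) ->
  (forall a, In a W -> In a (zero_exp :: A)) -> (forall a, In a W -> l a > 0) ->
  Rsum (length W) (fun j => l (nth j W zero_exp)) = 1 ->
  (forall i, (i < n)%nat ->
     Rsum (length W) (fun j => l (nth j W zero_exp) * INR (nth j W zero_exp i)) = INR (s i)) ->
  forall a, In a W -> G (toR a).
Proof.
  intros [w [c [Hsup Hiff]]] HGs HW Hpos Hsum Hco a Ha.
  apply Hiff in HGs. destruct HGs as [_ Hds].
  apply In_nth with (d := zero_exp) in Ha. destruct Ha as [j [Hj <-]].
  assert (HWj : forall j, (j < length W)%nat -> In (nth j W zero_exp) W) by (intros; apply nth_In; auto).
  destruct (Rsum_mean_eq_max (length W) (fun j => l (nth j W zero_exp))
              (fun j => dot n w (toR (nth j W zero_exp))) c) with (j := j)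
    as [H0|Hd]; auto.
  - intros k Hk. left. apply Hpos. auto.
  - intros k Hk. apply Hsup, inNew_generator, HW. auto.
  - rewrite <- Hds. symmetry. apply dot_comb. intros i Hi. unfold toR. rewrite Hco; auto.
  - specialize (Hpos _ (HWj j Hj)). lra.
  - apply Hiff. split; [apply inNew_generator, HW; auto|exact Hd].
Qed.

Lemma gem_degenerate_not_inV0 a : gem_degenerate n A a -> ~ inV0 n A a.
Proof.
  intros [_ [HnV [G [HG HGa]]]] Hv0. apply HnV. split; [exact Hv0|].
  apply (Gcal_member_nonzero G); auto.
Qed.

End Polytope.

Lemma exp_le_mono a b : a <= b -> exp a <= exp b.
Proof. intros [H|<-]; [left; apply exp_increasing; auto|lra]. Qed.

Lemma ln_le_mono a b : 0 < a -> a <= b -> ln a <= ln b.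
Proof. intros H [H'|<-]; [left; apply ln_increasing; auto|lra]. Qed.

Definition mon d (a : expo) (x : pt) := Rprod d (fun i => Rabs (x i) ^ a i).

Definition logmon d (a : expo) (x : pt) := Rsum d (fun i => INR (a i) * ln (Rabs (x i))).

Lemma mon_nonneg d a x : 0 <= mon d a x.
Proof.
  unfold mon. induction d. unfold Rprod; simpl; lra.
  rewrite Rprod_S. apply Rmult_le_pos; auto. apply pow_le. apply Rabs_pos.
Qed.

Lemma mon_eq0 d a x : (exists i, (i < d)%nat /\ (a i > 0)%nat /\ x i = 0) -> mon d a x = 0.
Proof.
  intros [k [Hk [Ha Hx]]]. unfold mon. induction d. lia.
  rewrite Rprod_S. destruct (Nat.eq_dec k d).
  - subst. rewrite Hx, Rabs_R0, pow_i by lia. ring.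
  - rewrite IHd by lia. ring.
Qed.

Lemma mon_exp_logmon d a x : (forall i, (i < d)%nat -> (a i > 0)%nat -> x i <> 0) ->
  mon d a x = exp (logmon d a x).
Proof.
  intro H. unfold mon, logmon. induction d.
  - unfold Rprod, Rsum; simpl. rewrite exp_0. reflexivity.
  - rewrite Rprod_S, Rsum_S, exp_plus, IHd by (intros; apply H; lia). f_equal.
    destruct (a d) eqn:E.
    + simpl. rewrite Rmult_0_l, exp_0. reflexivity.
    + assert (0 < Rabs (x d)) by (apply Rabs_pos_lt; apply H; lia).
      rewrite <- (Rpower_pow (S n)) by auto. reflexivity.
Qed.

Lemma mon_vanishing d a x : (forall i, (i < d)%nat -> a i = 0%nat) -> mon d a x = 1.
Proof.
  intro H. unfold mon. induction d. reflexivity.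
  rewrite Rprod_S, IHd by (intros; apply H; lia). rewrite H by lia. simpl. lra.
Qed.

Lemma Rabs_monomial d a x : Rabs (Rprod d (fun i => x i ^ a i)) = mon d a x.
Proof.
  unfold mon. induction d. unfold Rprod; simpl; apply Rabs_R1.
  rewrite !Rprod_S, Rabs_mult, IHd, RPow_abs. reflexivity.
Qed.

Lemma monomial_even d a x : all_even d a = true -> Rprod d (fun i => x i ^ a i) = mon d a x.
Proof.
  intro H. unfold mon. apply Rprod_ext. intros i Hi.
  unfold all_even in H. rewrite forallb_forall in H.
  assert (He : Nat.even (a i) = true) by (apply H; apply in_seq; lia).
  apply Nat.even_spec in He. destruct He as [k Hk]. rewrite Hk, !pow_mult, pow2_abs. reflexivity.
Qed.

Section ExponentCombination.
Variables (d m : nat) (G : nat -> expo) (mu : nat -> R) (b : expo).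
Hypothesis mu_nonneg : forall j, (j < m)%nat -> 0 <= mu j.
Hypothesis b_comb : forall i, (i < d)%nat -> INR (b i) = Rsum m (fun j => mu j * INR (G j i)).

Lemma comb_support_incl j : (j < m)%nat -> 0 < mu j ->
  forall i, (i < d)%nat -> (G j i > 0)%nat -> (b i > 0)%nat.
Proof.
  intros Hj Hpos i Hi HG. apply INR_lt. simpl. rewrite b_comb by auto.
  eapply Rlt_le_trans; [|apply (Rsum_ge_term m (fun j => mu j * INR (G j i)) j Hj)].
  - apply Rmult_lt_0_compat; auto. apply lt_0_INR. lia.
  - intros. apply Rmult_le_pos; auto. apply pos_INR.
Qed.

Lemma logmon_comb x : logmon d b x = Rsum m (fun j => mu j * logmon d (G j) x).
Proof.
  unfold logmon.
  rewrite (Rsum_ext d _ (fun i => Rsum m (fun j => mu j * INR (G j i) * ln (Rabs (x i))))).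
  - rewrite Rsum_swap. apply Rsum_ext. intros j _. rewrite <- Rsum_scal.
    apply Rsum_ext. intros; ring.
  - intros i Hi. rewrite b_comb, Rsum_scal_r by auto. reflexivity.
Qed.

Lemma comb_nonvanishing x : (forall i, (i < d)%nat -> (b i > 0)%nat -> x i <> 0) ->
  forall j, (j < m)%nat -> 0 < mu j -> mon d (G j) x = exp (logmon d (G j) x).
Proof.
  intros Hnz j Hj Hpos. apply mon_exp_logmon. intros i Hi HGi.
  apply Hnz; auto. apply (comb_support_incl j); auto.
Qed.

Lemma mon_comb_le_Rpower x M : 0 < M -> (forall j, (j < m)%nat -> mon d (G j) x <= M) ->
  mon d b x <= Rpower M (Rsum m mu).
Proof.
  intros HM HG.
  destruct (classic (exists i, (i < d)%nat /\ (b i > 0)%nat /\ x i = 0)) as [Hz|Hz].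
  { rewrite mon_eq0 by auto. unfold Rpower. left; apply exp_pos. }
  assert (Hnz : forall i, (i < d)%nat -> (b i > 0)%nat -> x i <> 0)
    by (intros i Hi Hbi Hx; apply Hz; exists i; auto).
  rewrite mon_exp_logmon, logmon_comb by auto. unfold Rpower.
  apply exp_le_mono. rewrite <- Rsum_scal_r. apply Rsum_le. intros j Hj.
  destruct (mu_nonneg j Hj) as [Hp|H0]; [|rewrite <- H0; lra].
  apply Rmult_le_compat_l; [lra|].
  specialize (HG j Hj). rewrite (comb_nonvanishing x Hnz j Hj Hp) in HG.
  rewrite <- (ln_exp (logmon d (G j) x)). apply ln_le_mono; auto. apply exp_pos.
Qed.

End ExponentCombination.

Lemma ln_le_sub1 z : 0 < z -> ln z <= z - 1.
Proof. intro H. pose proof (exp_ineq1_le (ln z)). rewrite exp_ln in H0 by auto. lra. Qed.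

(* [ln z <= z - 1] applied to [z = y_j / T], with [T] the weighted mean. *)
Lemma weighted_amgm m (l y : nat -> R) :
  (forall j, (j < m)%nat -> 0 < l j) -> (forall j, (j < m)%nat -> 0 < y j) -> Rsum m l = 1 ->
  exp (Rsum m (fun j => l j * ln (y j))) <= Rsum m (fun j => l j * y j).
Proof.
  intros Hl Hy Hs. set (T := Rsum m (fun j => l j * y j)).
  assert (HmP : (0 < m)%nat) by (destruct m; [rewrite Rsum_0 in Hs; lra| lia]).
  assert (HT : 0 < T).
  { unfold T. eapply Rlt_le_trans; [|apply (Rsum_ge_term m _ 0%nat HmP)].
    - apply Rmult_lt_0_compat; auto.
    - intros. apply Rmult_le_pos; left; auto. }
  rewrite <- (exp_ln T) by auto. apply exp_le_mono.
  assert (Hk : Rsum m (fun j => l j * (ln (y j) - ln T)) <= Rsum m (fun j => l j * (y j / T - 1))).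
  { apply Rsum_le. intros j Hj. apply Rmult_le_compat_l; [left; auto|].
    replace (ln (y j) - ln T) with (ln (y j / T))
      by (unfold Rdiv; rewrite ln_mult, ln_Rinv by auto using Rinv_0_lt_compat; ring). apply ln_le_sub1. apply Rdiv_lt_0_compat; auto. }
  rewrite (Rsum_ext m _ (fun j => l j * ln (y j) - ln T * l j)) in Hk by (intros; ring).
  rewrite (Rsum_ext m (fun j => l j * (y j / T - 1)) (fun j => / T * (l j * y j) - l j)) in Hk
    by (intros; field; lra).
  rewrite !Rsum_minus, !Rsum_scal, Hs in Hk. fold T in Hk. rewrite Rinv_l in Hk by lra. lra.
Qed.

Lemma mon_amgm d m x (G : nat -> expo) (l c : nat -> R) (s : expo) :
  (forall j, (j < m)%nat -> 0 < l j) -> (forall j, (j < m)%nat -> 0 < c j) -> Rsum m l = 1 ->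
  (forall i, (i < d)%nat -> INR (s i) = Rsum m (fun j => l j * INR (G j i))) ->
  exp (Rsum m (fun j => l j * ln (c j / l j))) * mon d s x
    <= Rsum m (fun j => c j * mon d (G j) x).
Proof.
  intros Hl Hc Hs Hco.
  assert (Hl0 : forall j, (j < m)%nat -> 0 <= l j) by (intros; left; auto).
  destruct (classic (exists i, (i < d)%nat /\ (s i > 0)%nat /\ x i = 0)) as [Hz|Hz].
  { rewrite mon_eq0 by auto. rewrite Rmult_0_r. apply Rsum_nonneg. intros j Hj.
    apply Rmult_le_pos; [left; auto|apply mon_nonneg]. }
  assert (Hnz : forall i, (i < d)%nat -> (s i > 0)%nat -> x i <> 0)
    by (intros i Hi Hbi Hx; apply Hz; exists i; auto).
  set (y := fun j => c j / l j * exp (logmon d (G j) x)).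
  assert (Hy : forall j, (j < m)%nat -> 0 < y j).
  { intros j Hj. apply Rmult_lt_0_compat; [apply Rdiv_lt_0_compat; auto|apply exp_pos]. }
  replace (Rsum m (fun j => c j * mon d (G j) x)) with (Rsum m (fun j => l j * y j)).
  2:{ apply Rsum_ext. intros j Hj. rewrite (comb_nonvanishing d m G l s Hl0 Hco x Hnz j Hj)
        by auto. unfold y. field. specialize (Hl j Hj). lra. }
  eapply Rle_trans; [|apply weighted_amgm; auto].
  rewrite (mon_exp_logmon d s x Hnz), (logmon_comb d m G l s Hco), <- exp_plus, <- Rsum_plus.
  right. f_equal. apply Rsum_ext. intros j Hj. unfold y.
  rewrite ln_mult, ln_exp; [ring|apply Rdiv_lt_0_compat; auto|apply exp_pos].
Qed.

Lemma Rpower_le_linear sg eps : 0 <= sg < 1 -> 0 < eps ->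
  exists Z, forall B, 1 <= B -> Rpower B sg <= eps * B + Z.
Proof.
  intros Hs He. set (T := Rpower eps (- / (1 - sg))).
  assert (HT : 0 < T) by (unfold T, Rpower; apply exp_pos).
  exists T. intros B HB.
  destruct (Rle_or_lt B T) as [H|H].
  - assert (Rpower B sg <= Rpower B 1) by (apply Rle_Rpower; lra).
    rewrite Rpower_1 in H0 by lra. nra.
  - replace sg with (1 + (sg - 1)) by ring. rewrite Rpower_plus, Rpower_1 by lra.
    assert (Rpower B (sg - 1) <= Rpower T (sg - 1)).
    { unfold Rpower. apply exp_le_mono. apply Rmult_le_compat_neg_l; [lra|].
      apply ln_le_mono; lra. }
    assert (Rpower T (sg - 1) = eps).
    { unfold T. rewrite Rpower_mult. replace (- / (1 - sg) * (sg - 1)) with 1 by (field; lra).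
      apply Rpower_1; auto. }
    nra.
Qed.

Lemma nzb_iff n a : nzb n a = true <-> Defs.nonzero n a.
Proof.
  unfold nzb, Defs.nonzero. rewrite existsb_exists. split.
  - intros [i [Hin Hb]]. apply in_seq in Hin. exists i. split; [lia|].
    intro H. rewrite H in Hb. discriminate.
  - intros [i [Hi Ha]]. exists i. split; [apply in_seq; lia|].
    destruct (Nat.eqb_spec (a i) 0); [contradiction|reflexivity].
Qed.

Lemma inV_In n A a : inV n A a -> In a A.
Proof.
  intros [[[<-|H] _] [i [_ Hai]]]; [exfalso; apply Hai; reflexivity|exact H].
Qed.

(** * The vertex part and the remaining terms *)

Section Polynomial.
Variables (n : nat) (A : list expo) (coef : expo -> R).
Hypothesis coef_vertex_pos : condC2 n A coef.

Definition vertex_term (x : pt) (a : expo) := if decP (inV n A a) then coef a * mon n a x else 0.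

Definition vertex_part (x : pt) := lsum A (vertex_term x).

Lemma vertex_term_nonneg x a : 0 <= vertex_term x a.
Proof.
  unfold vertex_term. destruct (decP (inV n A a)) eqn:E; [|lra].
  apply Rmult_le_pos; [left; apply coef_vertex_pos, decP_spec, E|apply mon_nonneg].
Qed.

Lemma vertex_part_nonneg x : 0 <= vertex_part x.
Proof. apply lsum_nonneg. intros. apply vertex_term_nonneg. Qed.

Lemma vertex_part_ge_term x a : inV n A a -> coef a * mon n a x <= vertex_part x.
Proof.
  intro Ha. replace (coef a * mon n a x) with (vertex_term x a)
    by (unfold vertex_term; rewrite decP_true; auto).
  apply lsum_ge_term; [apply (inV_In n A); auto|intros; apply vertex_term_nonneg].
Qed.

Lemma vertex_coef_lower_bound : exists c0, 0 < c0 /\ forall a, inV n A a -> c0 <= coef a.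
Proof.
  assert (HL : forall L : list expo, exists c0, 0 < c0 /\
                 forall a, In a L -> inV n A a -> c0 <= coef a).
  { induction L as [|b L [c [Hc HL]]].
    - exists 1. split; [lra|]. intros a [].
    - destruct (classic (inV n A b)) as [Hb|Hb].
      + exists (Rmin c (coef b)). split; [apply Rmin_pos; auto; apply coef_vertex_pos; auto|].
        intros a [<-|Ha] Hv; [apply Rmin_r|]. eapply Rle_trans; [apply Rmin_l|auto].
      + exists c. split; [auto|]. intros a [<-|Ha] Hv; [contradiction|auto]. }
  destruct (HL A) as [c0 [Hc0 H]]. exists c0. split; [auto|].
  intros a Ha. apply H; [apply (inV_In n A)|]; auto.
Qed.

Definition vertex_gauge (c0 : R) (x : pt) := 1 + vertex_part x / c0.

Definition nondeg_term (x : pt) (a : expo) :=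
  if decP (inV n A a) then 0
  else if decP (gem_degenerate n A a) then 0 else Rabs (coef a) * mon n a x.

Section VertexGauge.
Variable c0 : R.
Hypothesis c0_pos : 0 < c0.
Hypothesis c0_le_coef : forall a, inV n A a -> c0 <= coef a.

Lemma vertex_gauge_ge1 x : 1 <= vertex_gauge c0 x.
Proof.
  unfold vertex_gauge. assert (0 <= vertex_part x / c0).
  { apply Rmult_le_pos; [apply vertex_part_nonneg|left; apply Rinv_0_lt_compat; auto]. }
  lra.
Qed.

Lemma vertex_mon_le_gauge v x : inV0 n A v -> mon n v x <= vertex_gauge c0 x.
Proof.
  intro Hv. pose proof (vertex_gauge_ge1 x).
  destruct (classic (Defs.nonzero n v)) as [Hnz|Hnz].
  - assert (HvV : inV n A v) by (split; auto).
    pose proof (vertex_part_ge_term x v HvV). pose proof (c0_le_coef v HvV).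
    pose proof (mon_nonneg n v x).
    assert (mon n v x <= vertex_part x / c0).
    { apply (Rmult_le_reg_l c0); auto. field_simplify; nra. }
    unfold vertex_gauge. lra.
  - rewrite mon_vanishing; [lra|]. apply vanishing_of_not_nonzero. exact Hnz.
Qed.

Lemma generator_mon_le_gauge a x : In a (zero_exp :: A) -> mon n a x <= vertex_gauge c0 x.
Proof.
  intro Ha. destruct (generator_vertex_comb n A a Ha) as [mu [Hmu [Hs Hco]]].
  assert (HB := vertex_gauge_ge1 x).
  rewrite <- (Rpower_1 (vertex_gauge c0 x)), <- Hs by lra.
  apply (mon_comb_le_Rpower n _ (fun j => nth j (vertex_list n A) zero_exp) mu a); auto; [lra|].
  intros j Hj. apply vertex_mon_le_gauge.
  assert (Hv : In (nth j (vertex_list n A) zero_exp) (vertex_list n A)) by (apply nth_In; auto).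
  apply filter_In in Hv. apply decP_spec, Hv.
Qed.

(* A non-degenerate exponent is a combination of generators with total weight [sg < 1],
   so its monomial grows at most like [vertex_gauge ^ sg]. *)
Lemma nondeg_term_sublinear a : In a A -> forall eps, 0 < eps ->
  exists Z, forall x, nondeg_term x a <= eps * vertex_gauge c0 x + Z.
Proof.
  intros Ha eps He. unfold nondeg_term.
  destruct (decP (inV n A a)) eqn:E1; [exists 0; intro x; pose proof (vertex_gauge_ge1 x); nra|].
  destruct (decP (gem_degenerate n A a)) eqn:E2;
    [exists 0; intro x; pose proof (vertex_gauge_ge1 x); nra|].
  assert (HnV : ~ inV n A a) by (intro H; rewrite decP_true in E1; auto; discriminate).
  assert (HnD : ~ gem_degenerate n A a) by (intro H; rewrite decP_true in E2; auto; discriminate).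
  destruct (nondegenerate_subconvex_comb n A a Ha HnV HnD) as [mu [Hmu [Hs Hco]]].
  set (ca := Rabs (coef a)). assert (Hca : 0 <= ca) by apply Rabs_pos.
  assert (Hsg : 0 <= Rsum (length A) mu < 1) by (split; auto; apply Rsum_nonneg; auto).
  destruct (Rpower_le_linear _ (eps / (ca + 1)) Hsg) as [Z HZ]; [apply Rdiv_lt_0_compat; lra|].
  exists (ca * Z). intro x. pose proof (vertex_gauge_ge1 x) as HB.
  assert (Hm : mon n a x <= Rpower (vertex_gauge c0 x) (Rsum (length A) mu)).
  { apply (mon_comb_le_Rpower n _ (fun j => nth j A zero_exp) mu a); auto; [lra|].
    intros j Hj. apply generator_mon_le_gauge. right. apply nth_In; auto. }
  specialize (HZ _ HB).
  assert (ca * (eps / (ca + 1)) <= eps).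
  { apply (Rmult_le_reg_l (ca + 1)); [lra|]. field_simplify; nra. }
  assert (ca * mon n a x <= ca * (eps / (ca + 1) * vertex_gauge c0 x + Z))
    by (apply Rmult_le_compat_l; lra).
  nra.
Qed.

Lemma nondeg_sum_sublinear eps : 0 < eps ->
  exists Z, forall x, lsum A (nondeg_term x) <= eps * vertex_gauge c0 x + Z.
Proof.
  assert (H : forall L, incl L A -> forall eps, 0 < eps ->
                exists Z, forall x, lsum L (nondeg_term x) <= eps * vertex_gauge c0 x + Z).
  { induction L as [|b L IH]; intros Hinc e He.
    - exists 0. intro x. pose proof (vertex_gauge_ge1 x). unfold lsum; simpl. nra.
    - destruct (IH (fun a Ha => Hinc a (or_intror Ha)) (e / 2)) as [Z1 HZ1]; [lra|].
      destruct (nondeg_term_sublinear b (Hinc b (or_introl eq_refl)) (e / 2)) as [Z2 HZ2];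
        [lra|].
      exists (Z1 + Z2). intro x. rewrite lsum_cons. specialize (HZ1 x). specialize (HZ2 x).
      lra. }
  apply H, incl_refl.
Qed.

End VertexGauge.

Lemma vertex_part_ge_coord c0 x i : condC3 n A -> (forall a, inV n A a -> c0 <= coef a) ->
  0 < c0 -> (i < n)%nat -> 1 <= x i ^ 2 -> c0 * x i ^ 2 <= vertex_part x.
Proof.
  intros HC3 Hc Hc0 Hi Hx.
  destruct (HC3 i Hi) as [k [Hk [a [Hv [Hai Haj]]]]].
  assert (Hmon : mon n a x = Rabs (x i) ^ (2 * k)).
  { unfold mon. rewrite <- (Rprod_indicator n i (Rabs (x i) ^ (2 * k))) by auto.
    apply Rprod_ext. intros j Hj. destruct (Nat.eqb_spec j i).
    - subst. rewrite Hai. reflexivity.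
    - rewrite Haj by auto. reflexivity. }
  assert (H1 : 1 <= Rabs (x i)).
  { rewrite <- pow2_abs in Hx. pose proof (Rabs_pos (x i)).
    destruct (Rle_or_lt 1 (Rabs (x i))); auto. simpl in Hx. nra. }
  assert (Rabs (x i) ^ 2 <= Rabs (x i) ^ (2 * k)) by (apply Rle_pow; auto; lia).
  rewrite pow2_abs, <- Hmon in H.
  pose proof (vertex_part_ge_term x a Hv). pose proof (Hc a Hv). pose proof (mon_nonneg n a x).
  nra.
Qed.

End Polynomial.

Section Circuits.
Variables (n : nat) (A : list expo) (coef : expo -> R) (lam : expo -> expo -> R).
Hypothesis A_nodup : NoDup A.
Hypothesis coef_vertex_pos : condC2 n A coef.
Hypothesis lam_min_bary : min_bary n A lam.

Lemma gem_circuit s : gem_degenerate n A s ->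
  exists W : list expo,
    NoDup W /\ (forall a, In a W -> inV n A a) /\ (forall a, In a W -> lam s a > 0) /\
    (forall a, inV0 n A a -> ~ In a W -> lam s a = 0) /\
    (forall i, (i < n)%nat ->
       Rsum (length W) (fun j => lam s (nth j W zero_exp) * INR (nth j W zero_exp i))
       = INR (s i)) /\
    Rsum (length W) (fun j => lam s (nth j W zero_exp)) = 1.
Proof.
  intro Hg. pose proof (gem_degenerate_not_inV0 n A s Hg) as Hnv0.
  destruct Hg as [HsA [_ [G [HG HGs]]]].
  destruct (lam_min_bary s HsA Hnv0) as [_ [W [HWnd [HWv [_ [HWp [HW0 [HWco HWs]]]]]]]].
  exists W. split; [auto|split; [|auto]].
  intros a Ha. split; [auto|]. apply (Gcal_member_nonzero n A G); auto.
  apply (face_contains_comb_support n A G s W (lam s)); auto; [apply HG|].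
  intros b Hb. apply HWv. auto.
Qed.

Lemma Theta_as_exp s W : NoDup W ->
  (forall a, In a W -> inV n A a) -> (forall a, In a W -> lam s a > 0) ->
  (forall a, inV0 n A a -> ~ In a W -> lam s a = 0) ->
  Theta n A coef lam s = exp (Rsum (length W) (fun j =>
    lam s (nth j W zero_exp) * ln (coef (nth j W zero_exp) / lam s (nth j W zero_exp)))).
Proof.
  intros HW HV Hp H0.
  unfold Theta. rewrite prod_Rpower_exp. f_equal. unfold gens_exp. rewrite lsum_cons.
  rewrite (decP_false (inV0 n A zero_exp /\ lam s zero_exp > 0)).
  2:{ intros [Hv Hl]. destruct (classic (In zero_exp W)) as [Hw|Hw].
      - destruct (HV _ Hw) as [_ [i [_ Hi]]]. apply Hi; reflexivity.
      - rewrite H0 in Hl by auto. lra. }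
  rewrite Rplus_0_l, lsum_filter, (Rsum_nth W zero_exp (fun a => lam s a * ln (coef a / lam s a))).
  apply lsum_perm, NoDup_Permutation; [apply NoDup_filter, NoDup_filter; auto|auto|].
  intro a. rewrite !filter_In. split.
  - intros [[HaA Hnz] Hd]. apply decP_spec in Hd. destruct Hd as [Hv Hl].
    apply NNPP. intro Hn. rewrite H0 in Hl by auto. lra.
  - intro Ha. destruct (HV a Ha) as [Hv0 Hnz].
    split; [split; [apply (inV_In n A); auto|apply nzb_iff; auto]|].
    apply decP_true. split; auto.
Qed.

Lemma Theta_mon_le_vertex_part s x : gem_degenerate n A s ->
  0 < Theta n A coef lam s /\ Theta n A coef lam s * mon n s x <= vertex_part n A coef x.
Proof.
  intro Hg. destruct (gem_circuit s Hg) as [W [HWnd [HWV [HWp [HW0 [HWco HWs]]]]]].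
  rewrite (Theta_as_exp s W) by auto. split; [apply exp_pos|].
  assert (HWj : forall j, (j < length W)%nat -> In (nth j W zero_exp) W)
    by (intros; apply nth_In; auto).
  eapply Rle_trans.
  { apply (mon_amgm n (length W) x (fun j => nth j W zero_exp) (fun j => lam s (nth j W zero_exp))
             (fun j => coef (nth j W zero_exp)) s); auto.
    - intros j Hj. apply HWp. auto.
    - intros j Hj. apply coef_vertex_pos, HWV. auto.
    - intros i Hi. rewrite HWco; auto. }
  rewrite (Rsum_nth W zero_exp (fun a => coef a * mon n a x)).
  rewrite (lsum_ext W _ (vertex_term n A coef x))
    by (intros a Ha; unfold vertex_term; rewrite decP_true; auto).
  apply lsum_incl_le; auto.
  - intros a Ha. apply (inV_In n A). auto.
  - intros. apply vertex_term_nonneg. auto.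
Qed.

Definition gem_term s :=
  if decP (gem_degenerate n A s) then
    (if all_even n s then - (Rmin 0 (coef s) / Theta n A coef lam s)
     else Rabs (coef s) / Theta n A coef lam s)
  else 0.

(* [|coef_s x^s| <= |coef_s| vertex_part / Theta]; for even [s] only the negative part
   of [coef_s] can lower the value. *)
Lemma gem_monomial_lower s x : gem_degenerate n A s ->
  - (gem_term s * vertex_part n A coef x) <= coef s * Rprod n (fun i => x i ^ s i).
Proof.
  intro Hg. destruct (Theta_mon_le_vertex_part s x Hg) as [Ht Hb].
  unfold gem_term. rewrite decP_true by auto.
  set (Th := Theta n A coef lam s) in *. set (Sx := vertex_part n A coef x) in *.
  pose proof (mon_nonneg n s x) as Hm. assert (0 < / Th) by (apply Rinv_0_lt_compat; auto).
  assert (Hmon : mon n s x <= / Th * Sx).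
  { apply (Rmult_le_reg_l Th); auto. rewrite <- Rmult_assoc, Rinv_r, Rmult_1_l; lra. }
  destruct (all_even n s) eqn:E.
  - rewrite monomial_even by auto.
    pose proof (Rmin_r 0 (coef s)). pose proof (Rmin_l 0 (coef s)).
    unfold Rdiv. nra.
  - rewrite <- (Rabs_monomial n s x) in Hmon.
    pose proof (Rabs_pos (coef s)).
    pose proof (Rle_abs (- (coef s * Rprod n (fun i => x i ^ s i)))) as Habs.
    rewrite Rabs_Ropp, Rabs_mult in Habs. unfold Rdiv. nra.
Qed.

Lemma monomial_lower a x : condC1 n A -> In a A ->
  vertex_term n A coef x a - gem_term a * vertex_part n A coef x - nondeg_term n A coef x a
    <= coef a * Rprod n (fun i => x i ^ a i).
Proof.
  intros HC1 Ha. unfold vertex_term, nondeg_term.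
  destruct (decP (inV n A a)) eqn:E1.
  - apply decP_spec in E1. unfold gem_term.
    rewrite (decP_false (gem_degenerate n A a)) by (intros [_ [H _]]; auto).
    rewrite monomial_even by (apply HC1; auto). lra.
  - destruct (decP (gem_degenerate n A a)) eqn:E2.
    + pose proof (gem_monomial_lower a x (decP_spec _ E2)). lra.
    + unfold gem_term. rewrite E2. rewrite <- Rabs_monomial, <- Rabs_mult.
      pose proof (Rle_abs (- (coef a * Rprod n (fun i => x i ^ a i)))).
      rewrite Rabs_Ropp in H. lra.
Qed.

Lemma eval_lower_bound x : condC1 n A ->
  (1 - gem_sum n A coef lam) * vertex_part n A coef x - lsum A (nondeg_term n A coef x)
    <= eval n A coef x.
Proof.
  intro HC1.
  change (eval n A coef x) with (lsum A (fun a => coef a * Rprod n (fun i => x i ^ a i))).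
  change (gem_sum n A coef lam) with (lsum A gem_term).
  eapply Rle_trans; [|apply lsum_le; intros a Ha; apply (monomial_lower a x HC1 Ha)].
  rewrite !lsum_minus, lsum_scal_r. unfold vertex_part. lra.
Qed.

End Circuits.

Lemma exists_large_coord n (x : pt) q : 1 <= q -> INR n * q < norm n x ->
  exists i, (i < n)%nat /\ q <= x i ^ 2.
Proof.
  intros Hq Hx. apply NNPP. intro Hno.
  assert (Hle : Rsum n (fun i => x i ^ 2) <= INR n * q).
  { rewrite <- Rsum_const. apply Rsum_le. intros i Hi.
    apply Rnot_lt_le. intro. apply Hno. exists i. split; [auto|lra]. }
  assert (Hn : 0 <= INR n) by apply pos_INR.
  assert (INR n * q <= (INR n * q) ^ 2).
  { destruct n; [simpl; lra|]. assert (1 <= INR (S n)) by (apply (le_INR 1); lia).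
    set (t := INR (S n) * q).
    assert (1 <= t) by (rewrite <- (Rmult_1_l 1); apply Rmult_le_compat; lra).
    simpl. nra. }
  assert (norm n x <= INR n * q).
  { unfold norm. rewrite <- (sqrt_pow2 (INR n * q)) by nra. apply sqrt_le_1_alt. lra. }
  lra.
Qed.

Lemma vertex_part_unbounded n A coef : condC2 n A coef -> condC3 n A ->
  forall Q, exists r, forall x, norm n x > r -> Q <= vertex_part n A coef x.
Proof.
  intros HC2 HC3 Q.
  destruct (vertex_coef_lower_bound n A coef HC2) as [c0 [Hc0 Hc]].
  set (q := 1 + Rmax 0 Q / c0).
  assert (Hq0 : 0 <= Rmax 0 Q / c0)
    by (apply Rmult_le_pos; [apply Rmax_l|left; apply Rinv_0_lt_compat; auto]).
  exists (INR n * q). intros x Hx.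
  destruct (exists_large_coord n x q) as [i [Hi Hxi]]; [unfold q; lra|lra|].
  assert (c0 * x i ^ 2 <= vertex_part n A coef x)
    by (apply (vertex_part_ge_coord n A coef HC2 c0); auto; unfold q in Hxi; lra).
  assert (c0 * q = c0 + Rmax 0 Q) by (unfold q; field; lra).
  pose proof (Rmax_r 0 Q). nra.
Qed.

(* The non-degenerate terms grow sublinearly in [vertex_part], so they eat at most half of
   the margin [1 - gem_sum]. *)
Lemma eval_ge_vertex_part n A coef lam : wf_poly n A coef -> condC1 n A -> condC2 n A coef ->
  min_bary n A lam -> gem_sum n A coef lam < 1 ->
  exists delta Z, 0 < delta /\ forall x, delta * vertex_part n A coef x - Z <= eval n A coef x.
Proof.
  intros [HND _] HC1 HC2 Hmb Hgs.
  destruct (vertex_coef_lower_bound n A coef HC2) as [c0 [Hc0 Hc]].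
  set (dl := 1 - gem_sum n A coef lam).
  assert (Hdl : 0 < dl) by (unfold dl; lra).
  destruct (nondeg_sum_sublinear n A coef HC2 c0 Hc0 Hc (dl * c0 / 2)) as [Z HZ].
  { apply Rdiv_lt_0_compat; [apply Rmult_lt_0_compat|]; lra. }
  exists (dl / 2), (dl * c0 / 2 + Z). split; [lra|]. intro x.
  pose proof (eval_lower_bound n A coef lam HND HC2 Hmb x HC1) as Hl. fold dl in Hl.
  specialize (HZ x). unfold vertex_gauge in HZ.
  assert (dl * c0 / 2 * (1 + vertex_part n A coef x / c0)
          = dl * c0 / 2 + dl / 2 * vertex_part n A coef x) by (field; lra).
  lra.
Qed.

Theorem mainTheorem3 (n : nat) (A : list expo) (coef : expo -> R)
  (lam : expo -> expo -> R) :
  wf_poly n A coef ->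
  condC1 n A -> condC2 n A coef -> condC3 n A ->
  min_bary n A lam ->
  gem_sum n A coef lam < 1 ->
  coercive n A coef.
Proof.
  intros Hwf HC1 HC2 HC3 Hmb Hgs M.
  destruct (eval_ge_vertex_part n A coef lam Hwf HC1 HC2 Hmb Hgs) as [delta [Z [Hd Hev]]].
  destruct (vertex_part_unbounded n A coef HC2 HC3 ((M + Z + 1) / delta)) as [r Hr].
  exists r. intros x Hx. specialize (Hev x). specialize (Hr x Hx).
  assert (delta * ((M + Z + 1) / delta) = M + Z + 1) by (field; lra).
  assert (delta * ((M + Z + 1) / delta) <= delta * vertex_part n A coef x)
    by (apply Rmult_le_compat_l; lra).
  lra.
Qed.
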